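(* Let $(T,s)$ be a signed tree that realizes a set $D$ of integers with $-1\notin D$. If $v$ is a vertex of $T$ with $sdeg(v)<0$, then $v$ is not a pendant vertex and $v$ is not adjacent to a limiting pendant vertex.
   Context: A signed tree is a pair $(T,s)$ where $T$ is a finite tree and $s:E(T)\to\{+,-\}$. The signed degree $sdeg(v)$ of a vertex is the number of incident positive edges minus the number of incident negative edges. $(T,s)$ realizes $D$ if $D=\{sdeg(v):v\in V(T)\}$. A pendant vertex is a vertex of degree $1$. A vertex of a tree $T$ is a limiting pendant vertex if it is an end vertex of some longest path of $T$. *)

From mathcomp Require Import all_boot all_order all_algebra.
Set Implicit Arguments. Unset Strict Implicit. Unset Printing Implicit Defensive.
Import GRing.Theory Num.Theory.

Definition simple_graph (V : finType) (e : rel V) : Prop :=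
  symmetric e /\ irreflexive e.

Definition has_cycle (V : finType) (e : rel V) : Prop :=
  exists c : seq V, 3 <= size c /\ ucycle e c.

(* A (finite) tree: connected acyclic simple graph (with at least one vertex,
   automatic once a vertex is given). *)
Definition is_tree (V : finType) (e : rel V) : Prop :=
  [/\ simple_graph e, (forall x y : V, connect e x y) & ~ has_cycle e].

(* Signing: a sign on each edge {u,w}, given as a function on 2-subsets;
   true = '+', false = '-'. *)
Definition signing (V : finType) := {set V} -> bool.

Definition pos_deg (V : finType) (e : rel V) (s : signing V) (v : V) : nat :=
  #|[set u | e v u && s [set v; u]]|.
Definition neg_deg (V : finType) (e : rel V) (s : signing V) (v : V) : nat :=
  #|[set u | e v u && ~~ s [set v; u]]|.

Definition sdeg (V : finType) (e : rel V) (s : signing V) (v : V) : int :=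
  (pos_deg e s v)%:Z - (neg_deg e s v)%:Z.

Definition realizes (V : finType) (e : rel V) (s : signing V) (D : pred int) : Prop :=
  forall d : int, d \in D <-> exists v : V, sdeg e s v = d.

Definition degree (V : finType) (e : rel V) (v : V) : nat := #|[set u | e v u]|.

Definition pendant (V : finType) (e : rel V) (v : V) : Prop := degree e v = 1%N.

(* A path x :: p : distinct vertices, consecutive ones adjacent;
   its length is size p (number of edges). *)
Definition is_gpath (V : finType) (e : rel V) (x : V) (p : seq V) : bool :=
  path e x p && uniq (x :: p).

Definition longest_path (V : finType) (e : rel V) (x : V) (p : seq V) : Prop :=
  is_gpath e x p /\ forall (y : V) (q : seq V), is_gpath e y q -> size q <= size p.

Definition limiting_pendant (V : finType) (e : rel V) (v : V) : Prop :=
  exists (x : V) (p : seq V), longest_path e x p /\ (v = x \/ v = last x p).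

(** Since [-1] is not realized, every pendant vertex has signed degree [1], i.e.
    every pendant edge is positive; in particular a vertex of negative signed
    degree is not pendant.  Let [u, a, ...] be a longest path.  Maximality
    forces every neighbour of [u] onto the path, and acyclicity then forces it
    to be [a]: so [a] is the only neighbour of [u].  The same argument, applied
    to the path [t, a, ...] for a neighbour [t] of [a] off the path, shows that
    every neighbour of [a] except its successor on the path is pendant.  Hence
    [a] has at most one negative edge and at least one positive one (to [u]),
    so [sdeg a >= 0]. *)

From mathcomp Require Import all_boot all_order all_algebra.
Set Implicit Arguments.
Unset Strict Implicit.
Unset Printing Implicit Defensive.
Import Order.TTheory GRing.Theory Num.Theory.
Local Open Scope ring_scope.

Section SignedDegree.
Variables (V : finType) (e : rel V) (s : signing V).

Lemma pendantP (y : V) : pendant e y <-> exists t, forall r, e y r = (r == t).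
Proof.
rewrite /pendant /degree; split => [/eqP/cards1P[t Ey] | [t Ey]].
  by exists t => r; rewrite -in_set1 -Ey inE.
by rewrite -(cards1 t); apply: eq_card => r; rewrite !inE Ey.
Qed.

Lemma sdeg_pendant (y t : V) : (forall r, e y r = (r == t)) ->
  sdeg e s y = (if s [set y; t] then 1 else -1).
Proof.
move=> Ey.
have card_nbr (P : pred V) : #|[set u | e y u && P u]| = P t.
  case Pt: (P t) => /=; [rewrite -(cards1 t) | rewrite -(cards0 V)];
    by apply: eq_card => r; rewrite !inE Ey; case: eqVneq => [->|]; rewrite ?Pt.
rewrite /sdeg /pos_deg /neg_deg !card_nbr.
by case: (s [set y; t]).
Qed.

Lemma pendant_edge_pos (D : pred int) : realizes e s D -> -1 \notin D ->
  forall y t, (forall r, e y r = (r == t)) -> s [set y; t].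
Proof.
move=> realD Dn1 y t Ey; case st: (s [set y; t]) => //.
move: Dn1; rewrite (proj2 (realD (-1))) //.
by exists y; rewrite (sdeg_pendant Ey) st.
Qed.

End SignedDegree.

Section LongestPaths.
Variables (V : finType) (e : rel V).
Hypotheses (e_sym : symmetric e) (e_irr : irreflexive e) (e_acyclic : ~ has_cycle e).

Lemma gpath_cons (y x : V) (p : seq V) :
  is_gpath e y (x :: p) = [&& e y x, y \notin x :: p & is_gpath e x p].
Proof. by rewrite /is_gpath cons_uniq [path _ _ _]/= -!andbA; do !bool_congr. Qed.

Lemma gpath_nbr_head (x : V) (p : seq V) (z : V) :
  is_gpath e x p -> e x z -> z \in p -> z = head x p.
Proof.
move=> /andP[xp_path xp_uniq] exz z_p.
case/splitPr: z_p xp_path xp_uniq => [[//|a p1] p2] xp_path xp_uniq.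
case: e_acyclic; exists (x :: rcons (a :: p1) z); split; first by rewrite /= size_rcons.
apply/andP; split.
- rewrite /cycle rcons_path last_rcons e_sym exz andbT.
  by move: xp_path; rewrite -cat_rcons cat_path => /andP[].
- by move: xp_uniq; rewrite -cat_rcons -cat_cons cat_uniq => /andP[].
Qed.

Lemma longest_path_rev (x : V) (p : seq V) : longest_path e x p ->
  longest_path e (last x p) (rev (belast x p)).
Proof.
case=> /andP[xp_path xp_uniq] xp_max; split.
- rewrite /is_gpath rev_path (eq_path (e' := e)) ?xp_path; last by move=> a b; exact: e_sym.
  by rewrite -rev_rcons rev_uniq -lastI.
- by move=> y q /xp_max; rewrite size_rev size_belast.
Qed.

Lemma longest_path_nbr (x : V) (p : seq V) (y : V) (q : seq V) (r : V) :
  longest_path e x p -> is_gpath e y q -> size q = size p -> e y r -> r = head y q.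
Proof.
move=> [_ xp_max] yq yq_size eyr; apply: gpath_nbr_head (yq) (eyr) _.
have [r_yq | r_yq] := boolP (r \in y :: q).
  by move: r_yq; rewrite inE => /predU1P[ry|//]; rewrite ry e_irr in eyr.
have := xp_max r (y :: q); rewrite gpath_cons e_sym eyr r_yq yq /= yq_size ltnn.
by move/(_ isT).
Qed.

Lemma longest_path_start_nbr (u v : V) (p : seq V) :
  longest_path e u p -> e u v -> p = v :: behead p.
Proof.
move=> up euv; case: p up => [|a p] up.
  have uv : u != v by apply: contraTneq euv => ->; rewrite e_irr.
  by have := proj2 up u [:: v]; rewrite gpath_cons euv !inE uv => /(_ isT).
by rewrite (longest_path_nbr up (proj1 up) erefl euv).
Qed.

Lemma longest_path_second_nbr (u a t : V) (p : seq V) :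
  longest_path e u (a :: p) -> e a t -> t != head a p -> forall r, e t r = (r == a).
Proof.
move=> up eat t_head; have := proj1 up; rewrite gpath_cons => /and3P[_ _ ap].
have t_ap : t \notin a :: p.
  rewrite inE negb_or (contraTneq _ eat) => [|->]; last by rewrite e_irr.
  by apply: contra t_head => /(gpath_nbr_head ap eat) ->.
have tap : is_gpath e t (a :: p).
  by rewrite gpath_cons e_sym eat t_ap ap.
move=> r; apply/idP/eqP => [|->]; last by rewrite e_sym.
exact: longest_path_nbr up tap erefl.
Qed.

Lemma longest_path_second_sdeg_ge0 (s : signing V) (u a : V) (p : seq V) :
  (forall y t, (forall r, e y r = (r == t)) -> s [set y; t]) ->
  longest_path e u (a :: p) -> 0 <= sdeg e s a.
Proof.
move=> pend_pos up.
have off_path_pos t : e a t -> t != head a p -> s [set a; t].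
  move=> eat t_head; rewrite setUC; apply: pend_pos.
  exact: longest_path_second_nbr up eat t_head.
have neg_sub : [set t | e a t && ~~ s [set a; t]] \subset [set head a p].
  apply/subsetP => t; rewrite !inE => /andP[eat]; apply: contraNT.
  exact: off_path_pos.
have pos_sup : [set u] \subset [set t | e a t && s [set a; t]].
  have := proj1 up; rewrite gpath_cons => /and3P[eua u_ap _].
  have eau : e a u by rewrite e_sym.
  apply/subsetP => t; rewrite !inE => /eqP ->; rewrite eau off_path_pos //.
  apply: contraNneq u_ap => ->.
  by case: (p) => [|b q]; rewrite /= ?mem_head // inE mem_head orbT.
rewrite /sdeg subr_ge0 lez_nat; apply: leq_trans (subset_leq_card neg_sub) _.
by rewrite cards1 -(cards1 u); exact: subset_leq_card pos_sup.
Qed.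

End LongestPaths.

Theorem mainTheorem4 (V : finType) (e : rel V) (s : signing V) (D : pred int) :
  is_tree e -> realizes e s D -> (-1 \notin D) ->
  forall v : V, sdeg e s v < 0 ->
    ~ pendant e v /\ ~ (exists u : V, e v u /\ limiting_pendant e u).
Proof.
case=> [[e_sym e_irr] _ e_acyclic] realD Dn1 v v_neg.
have pend_pos := pendant_edge_pos realD Dn1.
have sdeg_ge0 u p : longest_path e u p -> e v u -> 0 <= sdeg e s v.
  move=> up evu; rewrite e_sym in evu.
  have Ep := longest_path_start_nbr e_sym e_irr e_acyclic up evu.
  rewrite Ep in up.
  exact: (longest_path_second_sdeg_ge0 e_sym e_irr e_acyclic pend_pos up).
split.
- case/pendantP => t Ev.
  by move: v_neg; rewrite (sdeg_pendant s Ev) pend_pos.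
- case=> u [evu [x [p [xp [ux|ux]]]]]; subst u.
  + by rewrite ltNge (sdeg_ge0 _ _ xp evu) in v_neg.
  + by rewrite ltNge (sdeg_ge0 _ _ (longest_path_rev e_sym xp) evu) in v_neg.
Qed.
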